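(* Let $(\mathcal{P},\Sigma,\mu)$ be a measure space with $\mathcal{P}\subseteq\mathbb{C}^{n_p}$, such that $\overline{\mathsf{p}}\in\mathcal{P}$ for all $\mathsf{p}\in\mathcal{P}$, $\overline{S}\in\Sigma$ for all $S\in\Sigma$, and $\mu(\overline{S})=\mu(S)$ for all $S\in\Sigma$. Let $q_A,q_B,q_C,r,n_f,n_o$ be positive integers and let $\hat\alpha_i,\hat\beta_j,\hat\gamma_k:\mathcal{P}\to\mathbb{C}$ ($i=1,\dots,q_A$, $j=1,\dots,q_B$, $k=1,\dots,q_C$) be measurable functions satisfying $f(\overline{\mathsf{p}})=\overline{f(\mathsf{p})}$ for all $\mathsf{p}\in\mathcal{P}$ (for each such function $f$), and \[ \int_{\mathcal{P}}\left(\frac{\sum_{j=1}^{q_B}|\hat\beta_j(\mathsf{p})|\,\sum_{k=1}^{q_C}|\hat\gamma_k(\mathsf{p})|}{\sum_{i=1}^{q_A}|\hat\alpha_i(\mathsf{p})|}\right)^{2}\,d\mu(\mathsf{p})<\infty . \] Let $R=(\mathbb{R}^{r\times r})^{q_A}\times(\mathbb{R}^{r\times n_f})^{q_B}\times(\mathbb{R}^{n_o\times r})^{q_C}$, and for a tuple $(\hat A_i,\hat B_j,\hat C_k)\in R$ set $\hat{\mathcal{A}}(\mathsf{p})=\sum_{i=1}^{q_A}\hat\alpha_i(\mathsf{p})\hat A_i$, $\hat{\mathcal{B}}(\mathsf{p})=\sum_{j=1}^{q_B}\hat\beta_j(\mathsf{p})\hat B_j$, $\hat{\mathcal{C}}(\mathsf{p})=\sum_{k=1}^{q_C}\hat\gamma_k(\mathsf{p})\hat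 C_k$. Define \[ \mathcal{R}=\Big\{(\hat A_i,\hat B_j,\hat C_k)\in R:\ \operatorname*{ess\,sup}_{\mathsf{p}\in\mathcal{P}}\big\|\hat\alpha_i(\mathsf{p})\hat{\mathcal{A}}(\mathsf{p})^{-1}\big\|_F<\infty,\ i=1,\dots,q_A\Big\}. \] Then $\mathcal{R}$ is an open subset of $R$. Moreover, for every $(\hat A_i,\hat B_j,\hat C_k)\in\mathcal{R}$, the function $\hat y(\mathsf{p})=\hat{\mathcal{C}}(\mathsf{p})\hat{\mathcal{A}}(\mathsf{p})^{-1}\hat{\mathcal{B}}(\mathsf{p})$ is square-integrable, i.e. $\int_{\mathcal{P}}\|\hat y(\mathsf{p})\|_F^2\,d\mu(\mathsf{p})<\infty$.
   Context: $\|\cdot\|_F$ is the Frobenius norm; $R$ is regarded as a finite-dimensional real vector space with its usual topology. The essential supremum is with respect to $\mu$ (the condition in the definition of $\mathcal{R}$ includes that $\hat{\mathcal{A}}(\mathsf{p})$ is invertible for $\mu$-almost every $\mathsf{p}$). *)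

From HB Require Import structures.
From mathcomp Require Import all_boot all_order all_algebra.
From mathcomp Require Import all_classical all_reals all_analysis.
From mathcomp Require Import ess_sup_inf.
From mathcomp Require Export complex.
Import numFieldNormedType.Exports.

Set Implicit Arguments.
Unset Strict Implicit.
Unset Printing Implicit Defensive.

Import Order.TTheory GRing.Theory Num.Theory.
Local Open Scope ring_scope.
Local Open Scope complex_scope.

Section Defs.
Variable R : realType.

Definition cmod (z : R[i]) : R := Num.sqrt (complex.Re z ^+ 2 + complex.Im z ^+ 2).

Definition frob m n (M : 'M[R[i]]_(m, n)) : R :=
  Num.sqrt (\sum_(i < m) \sum_(j < n) cmod (M i j) ^+ 2).

Definition conj_rV np (v : 'rV[R[i]]_np) : 'rV[R[i]]_np := map_mx (@conjc R) v.

Definition cplx_mx m n (M : 'M[R]_(m, n)) : 'M[R[i]]_(m, n) :=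
  map_mx (fun x : R => x%:C) M.

(* measurability of a complex valued function (Borel sigma-algebra of C = R^2) *)
Definition cmeasurable d (T : measurableType d) (f : T -> R[i]) : Prop :=
  measurable_fun [set: T] (fun p => complex.Re (f p)) /\
  measurable_fun [set: T] (fun p => complex.Im (f p)).

Definition affine_mx (T : Type) q m n (f : 'I_q -> T -> R[i])
  (M : 'I_q -> 'M[R]_(m, n)) (p : T) : 'M[R[i]]_(m, n) :=
  \sum_(i < q) f i p *: cplx_mx (M i).

(* the space R = (R^{r x r})^qA x (R^{r x nf})^qB x (R^{no x r})^qC,
   with the product (= usual, finite-dimensional) topology *)
Definition Rspace (qA qB qC r nf no : nat) :=
  ({ptws 'I_qA -> 'M[R]_r} * {ptws 'I_qB -> 'M[R]_(r, nf)} *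
   {ptws 'I_qC -> 'M[R]_(no, r)})%type.

Definition calA (T : Type) qA qB qC r nf no (alpha : 'I_qA -> T -> R[i])
  (x : Rspace qA qB qC r nf no) := affine_mx alpha x.1.1.
Definition calB (T : Type) qA qB qC r nf no (beta : 'I_qB -> T -> R[i])
  (x : Rspace qA qB qC r nf no) := affine_mx beta x.1.2.
Definition calC (T : Type) qA qB qC r nf no (gamma : 'I_qC -> T -> R[i])
  (x : Rspace qA qB qC r nf no) := affine_mx gamma x.2.

Definition calR d (T : measurableType d) (mu : {measure set T -> \bar R})
  qA qB qC r nf no (alpha : 'I_qA -> T -> R[i]) : set (Rspace qA qB qC r nf no) :=
  [set x | {ae mu, forall p, calA alpha x p \in unitmx} /\
           forall i : 'I_qA,
             (ess_sup mu (fun p => (frob (alpha i p *: invmx (calA alpha x p)))%:E)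
              < +oo)%E].

Definition yhat (T : Type) qA qB qC r nf no (alpha : 'I_qA -> T -> R[i])
  (beta : 'I_qB -> T -> R[i]) (gamma : 'I_qC -> T -> R[i])
  (x : Rspace qA qB qC r nf no) (p : T) : 'M[R[i]]_(no, nf) :=
  calC gamma x p *m invmx (calA alpha x p) *m calB beta x p.

End Defs.

From HB Require Import structures.
From mathcomp Require Import all_boot all_order all_algebra.
From mathcomp Require Import all_classical all_reals all_analysis.
From mathcomp Require Import complex ess_sup_inf measurable_realfun.
From mathcomp Require Import ring lra.
Import numFieldNormedType.Exports.
Import Order.TTheory GRing.Theory Num.Theory.

(* Matrices are measured with the entrywise l1 norm |.|_1, which is
   submultiplicative and equivalent to the Frobenius norm.  A point x lies in
   calR iff there are constants L_i with |alpha_i(p) A(p)^-1|_1 <= L_i almost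
   everywhere.  If y is entrywise close to x, then A_y(p) = (1 + E(p)) A_x(p)
   with |E(p)|_1 <= 1/2, and the Neumann series gives the same kind of bound
   for y (with constants 2 r L_i); hence calR is open.  Summing the bounds
   gives (sum_i |alpha_i(p)|) |A(p)^-1|_1 <= sum_i L_i, so
   |y(p)|_F <= c (sum_j |beta_j(p)|)(sum_k |gamma_k(p)|) / sum_i |alpha_i(p)|
   almost everywhere, and the hypothesis on the integral of the square of the
   right-hand side concludes. *)

Set Implicit Arguments.
Unset Strict Implicit.
Unset Printing Implicit Defensive.

Local Open Scope ring_scope.
Local Open Scope classical_set_scope.
Local Open Scope complex_scope.

Section ComplexModulus.
Variable R : realType.
Local Notation C := R[i].

Lemma cmodE (z : C) : (cmod z)%:C = `|z|.
Proof. by rewrite normc_def. Qed.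

Lemma cmod_ge0 (z : C) : 0 <= cmod z.
Proof. exact: sqrtr_ge0. Qed.

Lemma cmod0 : cmod (0 : C) = 0.
Proof. by apply: complexI; rewrite cmodE normr0. Qed.

Lemma cmod1 : cmod (1 : C) = 1.
Proof. by apply: complexI; rewrite cmodE normr1. Qed.

Lemma cmodN (z : C) : cmod (- z) = cmod z.
Proof. by apply: complexI; rewrite !cmodE normrN. Qed.

Lemma cmodM (a b : C) : cmod (a * b) = cmod a * cmod b.
Proof. by apply: complexI; rewrite rmorphM /= !cmodE normrM. Qed.

Lemma cmodD (a b : C) : cmod (a + b) <= cmod a + cmod b.
Proof. by rewrite -lecR rmorphD /= !cmodE ler_normD. Qed.

Lemma cmod_eq0 (z : C) : (cmod z == 0) = (z == 0).
Proof.
by rewrite -[RHS]normr_eq0 -cmodE -[0 : C]/(0%:C) (inj_eq (@complexI R)).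
Qed.

Lemma cmodR (x : R) : cmod x%:C = `|x|.
Proof. by rewrite /cmod /= expr0n /= addr0 sqrtr_sqr. Qed.

Lemma ler_cmod_sum (I : finType) (F : I -> C) :
  cmod (\sum_i F i) <= \sum_i cmod (F i).
Proof.
rewrite -lecR cmodE rmorph_sum /=.
under [X in _ <= X]eq_bigr do rewrite cmodE.
exact: ler_norm_sum.
Qed.

Lemma sum_cmod_eq0 (I : finType) (F : I -> C) :
  \sum_i cmod (F i) = 0 -> forall i, F i = 0.
Proof.
move=> /eqP; rewrite psumr_eq0 => [/allP F0 i|i _]; last exact: cmod_ge0.
by apply/eqP; rewrite -cmod_eq0; apply: (implyP (F0 i (mem_index_enum _))).
Qed.

End ComplexModulus.

Lemma ler_sum_term (R : numDomainType) (I : finType) (F : I -> R) k :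
  (forall i, 0 <= F i) -> F k <= \sum_i F i.
Proof. by move=> F0; rewrite (bigD1 k) //= lerDl sumr_ge0. Qed.
Arguments ler_sum_term {R I} F {k}.

Lemma ler_sum_sqr (R : numDomainType) (I : finType) (F : I -> R) :
  (forall i, 0 <= F i) -> \sum_i F i ^+ 2 <= (\sum_i F i) ^+ 2.
Proof.
move=> F0; rewrite [leRHS]expr2 mulr_suml; apply: ler_sum => i _.
by rewrite expr2 ler_wpM2l // ler_sum_term.
Qed.

Section EntrywiseL1Norm.
Variable R : realType.
Local Notation C := R[i].

Definition mxl1 m n (M : 'M[C]_(m, n)) : R := \sum_i \sum_j cmod (M i j).

Lemma mxl1_ge0 m n (M : 'M[C]_(m, n)) : 0 <= mxl1 M.
Proof. by do 2![apply: sumr_ge0 => ? _]; exact: cmod_ge0. Qed.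

Lemma mxl10 m n : mxl1 (0 : 'M[C]_(m, n)) = 0.
Proof. by rewrite /mxl1 big1 // => i _; rewrite big1 // => j _; rewrite mxE cmod0. Qed.

Lemma mxl1N m n (M : 'M[C]_(m, n)) : mxl1 (- M) = mxl1 M.
Proof. by apply: eq_bigr => i _; apply: eq_bigr => j _; rewrite mxE cmodN. Qed.

Lemma mxl1Z m n c (M : 'M[C]_(m, n)) : mxl1 (c *: M) = cmod c * mxl1 M.
Proof.
rewrite /mxl1 mulr_sumr; apply: eq_bigr => i _; rewrite mulr_sumr.
by apply: eq_bigr => j _; rewrite mxE cmodM.
Qed.

Lemma mxl1D m n (M N : 'M[C]_(m, n)) : mxl1 (M + N) <= mxl1 M + mxl1 N.
Proof.
rewrite /mxl1 -big_split; apply: ler_sum => i _; rewrite -big_split.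
by apply: ler_sum => j _; rewrite mxE cmodD.
Qed.

Lemma mxl1_sum m n (I : finType) (F : I -> 'M[C]_(m, n)) :
  mxl1 (\sum_i F i) <= \sum_i mxl1 (F i).
Proof.
elim/big_rec2: _ => [|i y1 y2 _ IH]; first by rewrite mxl10.
by rewrite (le_trans (mxl1D _ _)) // lerD2l.
Qed.

Lemma mxl1_eq0 m n (M : 'M[C]_(m, n)) : mxl1 M = 0 -> M = 0.
Proof.
move=> /eqP; rewrite psumr_eq0 => [/allP M0|i _]; last first.
  by apply: sumr_ge0 => j _; exact: cmod_ge0.
apply/matrixP => i j; rewrite mxE.
by apply: sum_cmod_eq0; apply/eqP; apply: (implyP (M0 i (mem_index_enum _))).
Qed.

Lemma mxl1M m n p (M : 'M[C]_(m, n)) (N : 'M[C]_(n, p)) :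
  mxl1 (M *m N) <= mxl1 M * mxl1 N.
Proof.
rewrite /mxl1 mulr_suml; apply: ler_sum => i _.
apply: (@le_trans _ _ (\sum_j \sum_k cmod (M i k) * cmod (N k j))).
  apply: ler_sum => j _; rewrite mxE; apply: le_trans (ler_cmod_sum _) _.
  by apply: ler_sum => k _; rewrite cmodM.
rewrite exchange_big /= mulr_suml; apply: ler_sum => k _; rewrite -mulr_sumr.
apply: ler_wpM2l; first exact: cmod_ge0.
apply: (ler_sum_term (fun k => \sum_j cmod (N k j))) => l.
by apply: sumr_ge0 => j _; exact: cmod_ge0.
Qed.

Lemma mxl1_scalar1 n : mxl1 (1%:M : 'M[C]_n) = n%:R.
Proof.
rewrite /mxl1 (eq_bigr (fun _ => 1)) ?sumr_const ?card_ord // => i _.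
rewrite (bigD1 i) //= mxE eqxx cmod1 big1 ?addr0 // => j /negbTE ji.
by rewrite mxE eq_sym ji cmod0.
Qed.

Lemma mxl1_cplx m n (A : 'M[R]_(m, n)) :
  mxl1 (cplx_mx A) = \sum_i \sum_j `|A i j|.
Proof. by apply: eq_bigr => i _; apply: eq_bigr => j _; rewrite mxE cmodR. Qed.

Lemma frob_ge0 m n (M : 'M[C]_(m, n)) : 0 <= frob M.
Proof. exact: sqrtr_ge0. Qed.

Lemma frob_le_mxl1 m n (M : 'M[C]_(m, n)) : frob M <= mxl1 M.
Proof.
rewrite /frob -[mxl1 M]ger0_norm ?mxl1_ge0 // -sqrtr_sqr ler_wsqrtr //.
apply: (@le_trans _ _ (\sum_i (\sum_j cmod (M i j)) ^+ 2)).
  by apply: ler_sum => i _; apply: ler_sum_sqr => j; exact: cmod_ge0.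
by apply: ler_sum_sqr => i; apply: sumr_ge0 => j _; exact: cmod_ge0.
Qed.

Lemma cmod_le_frob m n (M : 'M[C]_(m, n)) i j : cmod (M i j) <= frob M.
Proof.
rewrite /frob -[cmod _]ger0_norm ?cmod_ge0 // -sqrtr_sqr ler_wsqrtr //.
apply: (@le_trans _ _ (\sum_j cmod (M i j) ^+ 2)).
  by apply: (ler_sum_term (fun j => cmod (M i j) ^+ 2)) => k; exact: sqr_ge0.
apply: (ler_sum_term (fun i => \sum_j cmod (M i j) ^+ 2)) => k.
by apply: sumr_ge0 => l _; exact: sqr_ge0.
Qed.

Lemma mxl1_le_frob m n (M : 'M[C]_(m, n)) : mxl1 M <= (m * n)%:R * frob M.
Proof.
apply: (@le_trans _ _ (\sum_(i < m) \sum_(j < n) frob M)).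
  by apply: ler_sum => i _; apply: ler_sum => j _; exact: cmod_le_frob.
by rewrite !sumr_const !card_ord -mulrnA mulnC mulr_natl.
Qed.

Lemma mxl1_lin_comb m n (I : finType) (a : I -> C) (M : I -> 'M[C]_(m, n)) :
  mxl1 (\sum_i a i *: M i) <= (\sum_i cmod (a i)) * \sum_i mxl1 (M i).
Proof.
apply: le_trans (mxl1_sum _) _; rewrite mulr_suml; apply: ler_sum => i _.
rewrite mxl1Z; apply: ler_wpM2l; first exact: cmod_ge0.
by apply: (ler_sum_term (fun i => mxl1 (M i))) => j; exact: mxl1_ge0.
Qed.

End EntrywiseL1Norm.

Section Perturbation.
Variable R : realType.
Local Notation C := R[i].

Lemma invmxM n (P Q : 'M[C]_n) : P \in unitmx -> Q \in unitmx ->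
  invmx (P *m Q) = invmx Q *m invmx P.
Proof.
move=> uP uQ; have uPQ : P *m Q \in unitmx by rewrite unitmx_mul uP uQ.
have PQ_inv : P *m Q *m (invmx Q *m invmx P) = 1%:M.
  by rewrite mulmxA -(mulmxA P) mulmxV // mulmx1 mulmxV.
by rewrite -[LHS]mulmx1 -PQ_inv mulmxA mulVmx // mul1mx.
Qed.

Lemma unitmx_1D n (E : 'M[C]_n) : mxl1 E < 1 -> 1%:M + E \in unitmx.
Proof.
move=> E_lt1; rewrite unitmxE unitfE; apply/negP => /det0P[v v_neq0 vE].
have v_eq : v = - (v *m E).
  by apply/eqP; rewrite -addr_eq0 -[X in X + _]mulmx1 -mulmxDr vE.
have v_le : mxl1 v <= mxl1 v * mxl1 E by rewrite {1}v_eq mxl1N mxl1M.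
have v_ge0 := mxl1_ge0 v.
have /mxl1_eq0 v0 : mxl1 v = 0 by nra.
by rewrite v0 eqxx in v_neq0.
Qed.

(* From W = 1 - E W, where W is the inverse of 1 + E. *)
Lemma mxl1_invmx_1D n (E : 'M[C]_n) : mxl1 E < 1 ->
  (1 - mxl1 E) * mxl1 (invmx (1%:M + E)) <= n%:R.
Proof.
move=> E_lt1; set W := invmx (1%:M + E).
have W_eq : W = 1%:M - E *m W.
  by rewrite -[in RHS](mulmxV (unitmx_1D E_lt1)) mulmxDl mul1mx addrK.
have : mxl1 W <= n%:R + mxl1 E * mxl1 W.
  by rewrite {1}W_eq (le_trans (mxl1D _ _)) // mxl1_scalar1 mxl1N lerD2l mxl1M.
lra.
Qed.

Lemma unitmx_perturb n (I : finType) (A : 'M[C]_n) (a : I -> C)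
    (D : I -> 'M[C]_n) (L : I -> R) :
  A \in unitmx -> (forall i, mxl1 (a i *: invmx A) <= L i) ->
  \sum_i mxl1 (D i) * L i <= 2^-1 ->
  A + \sum_i a i *: D i \in unitmx /\
  forall i, mxl1 (a i *: invmx (A + \sum_i a i *: D i)) <= 2 * n%:R * L i.
Proof.
move=> uA aA_le small.
set E := (\sum_i a i *: D i) *m invmx A.
have E_le : mxl1 E <= 2^-1.
  rewrite /E mulmx_suml; apply: le_trans (mxl1_sum _) _.
  apply: le_trans small.
  apply: ler_sum => i _; rewrite -scalemxAl scalemxAr.
  by apply: le_trans (mxl1M _ _) _; apply: ler_wpM2l; rewrite ?mxl1_ge0.
have E_lt1 : mxl1 E < 1 by lra.
have A_eq : A + \sum_i a i *: D i = (1%:M + E) *m A.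
  by rewrite mulmxDl mul1mx -mulmxA mulVmx // mulmx1.
have uE := unitmx_1D E_lt1.
split; first by rewrite A_eq unitmx_mul uE uA.
have W_le : mxl1 (invmx (1%:M + E)) <= 2 * n%:R.
  have := mxl1_invmx_1D E_lt1; have := mxl1_ge0 (invmx (1%:M + E)); nra.
move=> i; rewrite A_eq invmxM // scalemxAl mulrC.
apply: le_trans (mxl1M _ _) _.
by apply: ler_pM; rewrite ?mxl1_ge0.
Qed.

End Perturbation.

Section LowerIntegral.
Context d (T : measurableType d) (R : realType) (mu : {measure set T -> \bar R}).
Local Open Scope ereal_scope.
Import HBNNSimple.

(* No measurability is needed: the integral of a nonnegative function is the
   supremum of the integrals of its simple minorants. *)
Lemma ae_ge0_le_integralT (f g : T -> \bar R) :
  (forall x, 0 <= f x) -> (forall x, 0 <= g x) ->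
  {ae mu, forall x, f x <= g x} -> \int[mu]_x f x <= \int[mu]_x g x.
Proof.
move=> f0 g0 [N [mN muN fgN]]; rewrite !ge0_integralTE //.
apply: ge_ereal_sup => _ [h hf <-].
pose h' := proj_nnsfun h (measurableC mN).
have h'g x : (h' x)%:E <= g x.
  rewrite /h' /= mindicE; have [Nx|nNx] := pselect (N x).
    by rewrite memNset ?mulr0 //=; apply/negP; rewrite inE.
  rewrite mem_set //= mulr1; apply: le_trans (hf x) _.
  by apply: contrapT => nfg; apply: nNx; exact: fgN.
have -> : sintegral mu h = sintegral mu h'.
  rewrite -mrestrict -integral_nnsfun ?measurableC // -setTD.
  rewrite -ge0_negligible_integral ?integralT_nnsfun //.
  - by apply/measurable_EFinP; exact: measurable_funP.
  - by move=> x _; rewrite lee_fin.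
  - exact: measurableD.
by apply: ereal_sup_ubound; exists h'.
Qed.

Lemma ge0_integralZl_leT (g : T -> \bar R) (k : R) : (0 < k)%R ->
  (forall x, 0 <= g x) -> \int[mu]_x (k%:E * g x) <= k%:E * \int[mu]_x g x.
Proof.
move=> k_gt0 g0; have k_ge0 : 0 <= k%:E by rewrite lee_fin ltW.
rewrite ge0_integralTE => [|x]; last exact: mule_ge0.
apply: ge_ereal_sup => _ [h hkg <-].
have kV_ge0 : (0 <= k^-1)%R by rewrite invr_ge0 ltW.
pose h' := scale_nnsfun h kV_ge0.
have h'g x : (h' x)%:E <= g x.
  rewrite /= EFinM; apply: le_trans (lee_wpmul2l _ (hkg x)) _.
    by rewrite lee_fin.
  by rewrite muleA -EFinM mulVf ?gt_eqF // mul1e.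
have -> : sintegral mu h = k%:E * sintegral mu h'.
  by rewrite sintegralrM muleA -EFinM divff ?gt_eqF // mul1e.
apply: lee_wpmul2l => //; rewrite ge0_integralTE //.
by apply: ereal_sup_ubound; exists h'.
Qed.

End LowerIntegral.

Section PointwiseBounds.
Variable R : realType.
Local Notation C := R[i].

Lemma sum_cmod_gt0_unitmx (I : finType) r (a : I -> C) (M : I -> 'M[C]_r) :
  (0 < r)%N -> \sum_i a i *: M i \in unitmx -> 0 < \sum_i cmod (a i).
Proof.
move=> r_gt0 A_unit.
rewrite lt_def sumr_ge0 ?andbT => [|i _]; last exact: cmod_ge0.
apply/eqP => /sum_cmod_eq0 a0; move: A_unit.
rewrite big1 => [|i _]; last by rewrite a0 scale0r.
by case: r r_gt0 {M} => // r _; rewrite unitmxE det0 unitfE eqxx.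
Qed.

Lemma mxl1_le_sum_div (I : finType) m n (a : I -> C) (B : 'M[C]_(m, n))
    (L : I -> R) :
  0 < \sum_i cmod (a i) -> (forall i, mxl1 (a i *: B) <= L i) ->
  mxl1 B <= (\sum_i L i) / \sum_i cmod (a i).
Proof.
move=> a_gt0 aB_le; rewrite ler_pdivlMr // mulr_sumr.
by apply: ler_sum => i _; rewrite mulrC -mxl1Z.
Qed.

Lemma frob_mulmx_le m n p q (X : 'M[C]_(m, n)) (Y : 'M[C]_(n, p))
    (Z : 'M[C]_(p, q)) :
  frob (X *m Y *m Z) <= mxl1 X * mxl1 Y * mxl1 Z.
Proof.
apply: le_trans (frob_le_mxl1 _) _; apply: le_trans (mxl1M _ _) _.
by apply: ler_pM; rewrite ?mxl1_ge0 ?mxl1M.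
Qed.

End PointwiseBounds.

Lemma affine_mx_shift (R : realType) (T : Type) q m n (f : 'I_q -> T -> R[i])
    (M N : 'I_q -> 'M[R]_(m, n)) p :
  affine_mx f M p = affine_mx f N p + \sum_i f i p *: cplx_mx (M i - N i).
Proof.
rewrite /affine_mx -big_split; apply: eq_bigr => i _ /=.
rewrite -scalerDr; congr (_ *: _); apply/matrixP => j k.
by rewrite !mxE rmorphB addrC subrK.
Qed.

Lemma near_ptws_mx (R : realType) (I : finType) m n
    (M : {ptws I -> 'M[R]_(m, n)}) (e : R) :
  0 < e -> nbhs M (fun N : {ptws I -> 'M[R]_(m, n)} =>
    forall i j k, `|M i j k - N i j k| < e).
Proof.
move=> e_gt0.
pose close i j k (N : {ptws I -> 'M[R]_(m, n)}) := `|M i j k - N i j k| < e.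
have entry_near i j k : nbhs M (close i j k).
  have M_cont : (fun N : {ptws I -> 'M[R]_(m, n)} => N i j k) @ M --> M i j k.
    exact: continuous_comp (@proj_continuous _ _ i M)
      (@coord_continuous _ _ _ j k (M i)).
  exact: (cvgrPdist_lt _ _).1 M_cont e e_gt0.
apply: (@filter_forall _ I (fun i N => forall j k, close i j k N) (nbhs M) _) => i.
apply: (@filter_forall _ 'I_m (fun j N => forall k, close i j k N)) => j.
apply: (@filter_forall _ 'I_n (fun k => close i j k)); exact: entry_near.
Qed.

Section TransferFunction.
Context d (T : measurableType d) (R : realType) (mu : {measure set T -> \bar R}).
Variables (qA qB qC r nf no : nat).
Variables (alpha : 'I_qA -> T -> R[i]) (beta : 'I_qB -> T -> R[i])
  (gamma : 'I_qC -> T -> R[i]).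
Hypothesis r_gt0 : (0 < r)%N.
Local Notation X := (Rspace R qA qB qC r nf no).

Definition inv_bounded (x : X) (L : 'I_qA -> R) :=
  {ae mu, forall p, calA alpha x p \in unitmx /\
    forall i, mxl1 (alpha i p *: invmx (calA alpha x p)) <= L i}.

Lemma calR_inv_bounded (x : X) :
  calR mu alpha x -> exists2 L, (forall i, 0 <= L i) & inv_bounded x L.
Proof.
move=> [A_unit ess_bounded].
have /choice[M M_ub] i : exists M, {ae mu, forall p,
    frob (alpha i p *: invmx (calA alpha x p)) <= M}.
  exact: ess_supr_bounded (ess_bounded i).
exists (fun i => (r * r)%:R * `|M i|) => [i|]; first by rewrite mulr_ge0.
have M_ub' : {ae mu, forall p i,
    frob (alpha i p *: invmx (calA alpha x p)) <= M i}.
  by apply: filter_forall => i; exact: M_ub.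
apply: filterS (filterI A_unit M_ub') => p [p_unit p_ub].
split=> // i; apply: le_trans (mxl1_le_frob _) _.
by rewrite ler_wpM2l // (le_trans (p_ub i)) ?ler_norm.
Qed.

Lemma inv_bounded_calR (x : X) L : inv_bounded x L -> calR mu alpha x.
Proof.
move=> xL; split=> [|i]; first by apply: filterS xL => p [].
apply: (@le_lt_trans _ _ (L i)%:E); last exact: ltry.
apply/ess_supP; apply: filterS xL => p [_ /(_ i) p_ub].
by rewrite lee_fin (le_trans (frob_le_mxl1 _)).
Qed.

(* eps makes r^2 eps (sum_i L_i) <= 1/2, the smallness unitmx_perturb needs. *)
Lemma inv_bounded_near (x : X) L : (forall i, 0 <= L i) -> inv_bounded x L ->
  \forall y \near x, inv_bounded y (fun i => 2 * r%:R * L i).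
Proof.
move=> L_ge0 xL; set SL := \sum_i L i.
have SL1_gt0 : 0 < SL + 1.
  by rewrite ltr_wpDl //; apply: sumr_ge0 => i _; exact: L_ge0.
have rr_gt0 : 0 < (r * r)%:R :> R by rewrite ltr0n muln_gt0 r_gt0.
pose eps := 2^-1 / ((r * r)%:R * (SL + 1)).
have eps_gt0 : 0 < eps by rewrite divr_gt0 // mulr_gt0.
have fst2 : (fun y : X => y.1.1) @ x --> x.1.1.
  apply: (@cvg_comp _ _ _ (fun y : X => y.1) fst _ (nbhs x.1));
  exact: cvg_fst.
have x_near : nbhs x (fun y : X =>
    forall i j k, `|x.1.1 i j k - y.1.1 i j k| < eps).
  exact: fst2 _ (near_ptws_mx x.1.1 eps_gt0).
apply: filterS x_near => y y_near.
apply: filterS xL => p [A_unit A_ub].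
rewrite /calA (affine_mx_shift _ y.1.1 x.1.1); apply: unitmx_perturb => //.
have D_le i : mxl1 (cplx_mx (y.1.1 i - x.1.1 i)) <= (r * r)%:R * eps.
  rewrite mxl1_cplx; apply: (@le_trans _ _ (\sum_(j < r) \sum_(k < r) eps)).
    apply: ler_sum => j _; apply: ler_sum => k _.
    by rewrite !mxE distrC ltW.
  by rewrite !sumr_const !card_ord -mulrnA mulr_natl.
apply: (@le_trans _ _ ((r * r)%:R * eps * SL)).
  by rewrite mulr_sumr; apply: ler_sum => i _; exact: ler_wpM2r.
have -> : (r * r)%:R * eps * SL = 2^-1 * (SL / (SL + 1)).
  by rewrite /eps; field; rewrite gt_eqF // pnatr_eq0 -lt0n.
rewrite -[leRHS]mulr1; apply: ler_wpM2l => //; rewrite ler_pdivrMr //; lra.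
Qed.

Lemma open_calR : open (calR mu alpha : set X).
Proof.
rewrite openE => x /calR_inv_bounded[L L_ge0 /(inv_bounded_near L_ge0)].
by apply: filterS => y; exact: inv_bounded_calR.
Qed.

Lemma frob_yhat_le (x : X) L : (forall i, 0 <= L i) -> inv_bounded x L ->
  exists2 c, 0 < c & {ae mu, forall p, 0 < \sum_i cmod (alpha i p) /\
    frob (yhat alpha beta gamma x p) <=
    c * ((\sum_j cmod (beta j p)) * (\sum_k cmod (gamma k p))
         / \sum_i cmod (alpha i p))}.
Proof.
move=> L_ge0 xL.
set KB := \sum_j mxl1 (cplx_mx (x.1.2 j)).
set KC := \sum_k mxl1 (cplx_mx (x.2 k)).
have KB_ge0 : 0 <= KB by apply: sumr_ge0 => j _; exact: mxl1_ge0.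
have KC_ge0 : 0 <= KC by apply: sumr_ge0 => k _; exact: mxl1_ge0.
set SL := \sum_i L i.
have SL_ge0 : 0 <= SL by apply: sumr_ge0 => i _; exact: L_ge0.
have K_ge0 : 0 <= KC * SL * KB by rewrite !mulr_ge0.
exists (KC * SL * KB + 1); first by rewrite ltr_wpDl.
apply: filterS xL => p [A_unit A_ub].
have sa_gt0 := sum_cmod_gt0_unitmx r_gt0 A_unit.
split=> //; apply: le_trans (frob_mulmx_le _ _ _) _.
set sa := \sum_i cmod (alpha i p) in sa_gt0 *.
set sb := \sum_j cmod (beta j p).
set sg := \sum_k cmod (gamma k p).
have sb_ge0 : 0 <= sb by apply: sumr_ge0 => j _; exact: cmod_ge0.
have sg_ge0 : 0 <= sg by apply: sumr_ge0 => k _; exact: cmod_ge0.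
have C_le : mxl1 (calC gamma x p) <= sg * KC := mxl1_lin_comb _ _.
have B_le : mxl1 (calB beta x p) <= sb * KB := mxl1_lin_comb _ _.
have Ainv_le : mxl1 (invmx (calA alpha x p)) <= SL / sa.
  exact: mxl1_le_sum_div sa_gt0 A_ub.
apply: (@le_trans _ _ (sg * KC * (SL / sa) * (sb * KB))).
  apply: ler_pM; rewrite ?mxl1_ge0 //.
    exact: mulr_ge0 (mxl1_ge0 _) (mxl1_ge0 _).
  by apply: ler_pM; rewrite ?mxl1_ge0.
have -> : sg * KC * (SL / sa) * (sb * KB) = KC * SL * KB * (sb * sg / sa) :> R.
  by ring.
apply: ler_wpM2r; last by rewrite lerDl.
exact: divr_ge0 (mulr_ge0 sb_ge0 sg_ge0) (ltW sa_gt0).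
Qed.

Lemma yhat_sq_integrable (x : X) : calR mu alpha x ->
  (\int[mu]_p ((((\sum_j cmod (beta j p)) * (\sum_k cmod (gamma k p)))%:E
     / (\sum_i cmod (alpha i p))%:E) ^+ 2) < +oo)%E ->
  (\int[mu]_p ((frob (yhat alpha beta gamma x p)) ^+ 2)%:E < +oo)%E.
Proof.
move=> /calR_inv_bounded[L L_ge0 /(frob_yhat_le L_ge0)][c c_gt0 y_ub] w_fin.
have c2_gt0 : 0 < c ^+ 2 by rewrite exprn_gt0.
pose g p := ((c ^+ 2)%:E * (((\sum_j cmod (beta j p))
    * (\sum_k cmod (gamma k p)))%:E / (\sum_i cmod (alpha i p))%:E) ^+ 2)%E.
apply: le_lt_trans (ae_ge0_le_integralT (g := g) _ _ _) _.
- by move=> p; rewrite lee_fin sqr_ge0.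
- by move=> p; apply: mule_ge0; [rewrite lee_fin sqr_ge0 | exact: sqre_ge0].
- apply: filterS y_ub => p [sa_gt0 y_le].
  rewrite /g inver gt_eqF // -EFinM lee_fin.
  have := frob_ge0 (yhat alpha beta gamma x p); nra.
apply: le_lt_trans (ge0_integralZl_leT _ c2_gt0 _) _ => [p|].
  exact: sqre_ge0.
by rewrite lte_mul_pinfty ?lee_fin ?ltW.
Qed.

End TransferFunction.

Theorem lemma1 (R : realType) (d : measure_display) (T : measurableType d)
  (mu : {measure set T -> \bar R}) (np : nat)
  (emb : T -> 'rV[R[i]]_np) (cj : T -> T)
  (emb_inj : injective emb)
  (emb_cj : forall p, emb (cj p) = conj_rV (emb p))
  (cj_meas : forall S : set T, measurable S -> measurable (cj @` S))
  (mu_cj : forall S : set T, measurable S -> mu (cj @` S) = mu S)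
  (qA qB qC r nf no : nat)
  (qA_pos : (0 < qA)%N) (qB_pos : (0 < qB)%N) (qC_pos : (0 < qC)%N)
  (r_pos : (0 < r)%N) (nf_pos : (0 < nf)%N) (no_pos : (0 < no)%N)
  (alpha : 'I_qA -> T -> R[i]) (beta : 'I_qB -> T -> R[i])
  (gamma : 'I_qC -> T -> R[i])
  (alpha_meas : forall i, cmeasurable (alpha i))
  (beta_meas : forall j, cmeasurable (beta j))
  (gamma_meas : forall k, cmeasurable (gamma k))
  (alpha_cj : forall i p, alpha i (cj p) = conjc (alpha i p))
  (beta_cj : forall j p, beta j (cj p) = conjc (beta j p))
  (gamma_cj : forall k p, gamma k (cj p) = conjc (gamma k p))
  (H2 : (\int[mu]_(p in [set: T])
          ((((\sum_(j < qB) cmod (beta j p)) * (\sum_(k < qC) cmod (gamma k p)))%:E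
            / (\sum_(i < qA) cmod (alpha i p))%:E) ^+ 2) < +oo)%E) :
  open (calR mu (qB := qB) (qC := qC) (r := r) (nf := nf) (no := no) alpha) /\
  forall x : Rspace R qA qB qC r nf no,
    calR mu alpha x ->
    (\int[mu]_(p in [set: T]) ((frob (yhat alpha beta gamma x p)) ^+ 2)%:E < +oo)%E.
Proof.
split; first exact: open_calR r_pos.
move=> x xR.
exact: (yhat_sq_integrable (beta := beta) (gamma := gamma) r_pos xR H2).
Qed.
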